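(* Let $n$ be a positive integer and let $\alpha,\beta,\gamma,\delta: \mathcal{P}(n) \to [0,\infty)$ satisfy \[ \alpha(A)\beta(B) \leq \gamma(A \cup B)\,\delta(A \cap B) \quad \text{for all } A,B \in \mathcal{P}(n). \] Then \[ \sum_{A \in \mathcal{P}(n)}\alpha(A)\beta(A^c) \leq \sum_{C \in \mathcal{P}(n)}\gamma(C)\delta(C^c). \]
   Context: $[n]=\{1,\dots,n\}$, $\mathcal{P}(n)$ denotes the power set of $[n]$, and $A^c = [n]\setminus A$ denotes the complement of $A$ in $[n]$. *)

(* [n] is modelled by 'I_n (finite type of n elements),
   P(n) by {set 'I_n}, complement A^c by ~: A. Real values: any realFieldType. *)
From HB Require Import structures.
From mathcomp Require Import all_boot all_order all_algebra.

From mathcomp Require Import all_boot all_order all_algebra.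
From mathcomp Require Import ring lra.
Import Order.TTheory GRing.Theory Num.Theory.
Local Open Scope ring_scope.

(* The theorem is a corollary of the Ahlswede-Daykin four functions theorem:
   if a A * b B <= c (A :|: B) * d (A :&: B) for all A, B then
   (\sum a) * (\sum b) <= (\sum c) * (\sum d).
   - [sum2_le] and [four_functions_one_point] give the case of a single
     point, i.e. functions on the two subsets of a one-element set;
   - [sum_subset_setU1] splits a sum over the subsets of x |: U into a sum
     over the subsets of U, which lets [four_functions_subset] proceed by
     induction on #|U|; [four_functions] is the case U = setT.
   For the theorem we apply the four functions theorem to
   f A = alpha A * beta (~: A), B |-> f (~: B), g C = gamma C * delta (~: C)
   and D |-> g (~: D) ([complement_products_le]); complementation permutes
   the subsets, so both sides become squares (\sum f)^2 <= (\sum g)^2, and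
   we take square roots. *)

Lemma sum2_le (R : realFieldType) (p q r s : R) :
  0 <= p -> 0 <= q -> 0 <= s -> p <= r -> q <= r -> p * q <= r * s ->
  p + q <= r + s.
Proof.
move=> p0 q0 s0 pr qr pqrs.
have [r0|rpos] := eqVneq r 0.
  have p_eq0 : p = 0 by apply/eqP; rewrite eq_le p0 -r0 pr.
  have q_eq0 : q = 0 by apply/eqP; rewrite eq_le q0 -r0 qr.
  by rewrite p_eq0 q_eq0 r0 addr0 add0r.
have r_gt0 : 0 < r by rewrite lt_def rpos (le_trans p0 pr).
(* r * (p + q) <= r ^ 2 + p * q <= r * (r + s), as (r - p) * (r - q) >= 0. *)
rewrite -(ler_pM2l r_gt0); nra.
Qed.

(* The four functions theorem on a one-point set: the values at the empty
   set are a0, b0, c0, d0 and those at the singleton a1, b1, c1, d1. *)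
Lemma four_functions_one_point (R : realFieldType)
    (a0 a1 b0 b1 c0 c1 d0 d1 : R) :
  0 <= a0 -> 0 <= a1 -> 0 <= b0 -> 0 <= b1 ->
  0 <= c0 -> 0 <= c1 -> 0 <= d0 -> 0 <= d1 ->
  a0 * b0 <= c0 * d0 -> a1 * b1 <= c1 * d1 ->
  a0 * b1 <= c1 * d0 -> a1 * b0 <= c1 * d0 ->
  (a0 + a1) * (b0 + b1) <= (c0 + c1) * (d0 + d1).
Proof.
move=> a00 a10 b00 b10 c00 c10 d00 d10 h00 h11 h01 h10.
have cross : (a0 * b1) * (a1 * b0) <= (c1 * d0) * (c0 * d1).
  have -> : (a0 * b1) * (a1 * b0) = (a0 * b0) * (a1 * b1) by ring.
  have -> : (c1 * d0) * (c0 * d1) = (c0 * d0) * (c1 * d1) by ring.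
  by apply: ler_pM => //; apply: mulr_ge0.
have mixed : a0 * b1 + a1 * b0 <= c1 * d0 + c0 * d1.
  by apply: sum2_le => //; apply: mulr_ge0.
have -> : (a0 + a1) * (b0 + b1) = (a0 * b0 + a1 * b1) + (a0 * b1 + a1 * b0).
  by ring.
have -> : (c0 + c1) * (d0 + d1) = (c0 * d0 + c1 * d1) + (c1 * d0 + c0 * d1).
  by ring.
exact: lerD (lerD h00 h11) mixed.
Qed.

Lemma sum_subset_setU1 (R : nmodType) (T : finType) (U : {set T}) (x : T)
    (F : {set T} -> R) :
  x \notin U ->
  \sum_(A : {set T} | A \subset x |: U) F A
    = \sum_(A : {set T} | A \subset U) (F A + F (x |: A)).
Proof.
move=> xU.
have notin_sub (A : {set T}) : A \subset U -> x \notin A.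
  by move=> sAU; apply: contraNN xU; apply: (subsetP sAU).
rewrite big_split /= (bigID (fun A : {set T} => x \in A)) /= addrC.
congr (_ + _).
  apply: eq_bigl => A; apply/andP/idP => [[sA xA]|sAU].
    by rewrite -(setU1K xU) subsetD1 sA xA.
  by rewrite notin_sub // (subset_trans sAU (subsetUr _ _)).
rewrite (reindex_onto (fun B => x |: B) (fun A => A :\ x)) /=; last first.
  by move=> A /andP[_ xA]; rewrite setD1K.
apply: eq_bigl => B; apply/andP/idP => [[/andP[sB _] /eqP eB]|sBU].
  have xB : x \notin B by rewrite -eB setD11.
  by rewrite -(setU1K xU) subsetD1 xB andbT (subset_trans (subsetUr _ _) sB).
by rewrite setU11 setUS // setU1K ?notin_sub.
Qed.

(* The four functions theorem for set functions restricted to the subsets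
   of U, by induction on #|U|: removing a point x of U, the functions
   A |-> a A + a (x |: A) (etc.) on the subsets of U :\ x satisfy the
   hypothesis again, by the one-point case. *)
Lemma four_functions_subset (R : realFieldType) (T : finType)
    (a b c d : {set T} -> R) (U : {set T}) :
  (forall A, 0 <= a A) -> (forall A, 0 <= b A) ->
  (forall A, 0 <= c A) -> (forall A, 0 <= d A) ->
  (forall A B : {set T}, A \subset U -> B \subset U ->
     a A * b B <= c (A :|: B) * d (A :&: B)) ->
  (\sum_(A : {set T} | A \subset U) a A) *
  (\sum_(B : {set T} | B \subset U) b B)
    <= (\sum_(C : {set T} | C \subset U) c C) *
       (\sum_(D : {set T} | D \subset U) d D).
Proof.
move: {2}#|U| (erefl #|U|) => k; elim: k U a b c d => [|k IH] U a b c d cU.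
  move=> _ _ _ _ h; move/eqP: cU; rewrite cards_eq0 => /eqP ->.
  have sum_set0 (F : {set T} -> R) :
      \sum_(A : {set T} | A \subset set0) F A = F set0.
    by rewrite (big_pred1 set0) // => A; rewrite subset0.
  have := h _ _ (sub0set _) (sub0set _).
  by rewrite !sum_set0 setU0 setI0.
move=> ha hb hc hd h.
have [x xU] : {x | x \in U} by apply/sigW/card_gt0P; rewrite cU.
set V := U :\ x.
have xV : x \notin V by rewrite setD11.
have eU : U = x |: V by rewrite setD1K.
have cV : #|V| = k by move: cU; rewrite eU cardsU1 xV add1n => -[].
have sub_U (A : {set T}) : A \subset V -> A \subset U.
  by move=> sA; apply: subset_trans sA (subsetDl _ _).
have sub_xU (A : {set T}) : A \subset V -> x |: A \subset U.
  by move=> sA; rewrite subUset sub1set xU sub_U.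
rewrite eU !sum_subset_setU1 //.
apply: IH => // [A|A|A|A|A B sA sB]; try by apply: addr_ge0.
have xA : x \notin A by apply: contraNN xV; apply: (subsetP sA).
have xB : x \notin B by apply: contraNN xV; apply: (subsetP sB).
have set1I (C : {set T}) : x \notin C -> [set x] :&: C = set0.
  by rewrite -disjoints1; apply: disjoint_setI0.
apply: four_functions_one_point => //.
- exact: h (sub_U _ sA) (sub_U _ sB).
- have := h _ _ (sub_xU _ sA) (sub_xU _ sB).
  by rewrite setUACA setUid -setUIr.
- have := h _ _ (sub_U _ sA) (sub_xU _ sB).
  by rewrite setUCA setIUr [A :&: _]setIC set1I ?set0U.
- have := h _ _ (sub_xU _ sA) (sub_U _ sB).
  by rewrite -setUA setIUl set1I ?set0U.
Qed.

Lemma four_functions (R : realFieldType) (T : finType)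
    (a b c d : {set T} -> R) :
  (forall A, 0 <= a A) -> (forall A, 0 <= b A) ->
  (forall A, 0 <= c A) -> (forall A, 0 <= d A) ->
  (forall A B : {set T}, a A * b B <= c (A :|: B) * d (A :&: B)) ->
  (\sum_(A : {set T}) a A) * (\sum_(B : {set T}) b B)
    <= (\sum_(C : {set T}) c C) * (\sum_(D : {set T}) d D).
Proof.
move=> ha hb hc hd h.
have sum_subT (F : {set T} -> R) :
    \sum_(A : {set T} | A \subset setT) F A = \sum_A F A.
  by apply: eq_bigl => A; rewrite subsetT.
by rewrite -!sum_subT; apply: four_functions_subset.
Qed.

Lemma sum_setC (R : nmodType) (T : finType) (F : {set T} -> R) :
  \sum_(A : {set T}) F (~: A) = \sum_(A : {set T}) F A.
Proof.
by rewrite (reindex_inj (@setC_inj T)); apply: eq_bigr => A _; rewrite setCK.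
Qed.

(* The functions f A = alpha A * beta (~: A) and g C = gamma C * delta (~: C)
   satisfy the four functions hypothesis for (f, f \o setC, g, g \o setC):
   multiply the hypothesis at (A, B) with the one at (~: B, ~: A). *)
Lemma complement_products_le (R : realFieldType) (T : finType)
    (alpha beta gamma delta : {set T} -> R) :
  (forall A, 0 <= alpha A) -> (forall A, 0 <= beta A) ->
  (forall A B : {set T},
     alpha A * beta B <= gamma (A :|: B) * delta (A :&: B)) ->
  forall A B : {set T},
    (alpha A * beta (~: A)) * (alpha (~: B) * beta B)
      <= (gamma (A :|: B) * delta (~: (A :|: B)))
         * (gamma (~: (A :&: B)) * delta (A :&: B)).
Proof.
move=> ha hb hineq A B.
have hineqC := hineq (~: B) (~: A).
rewrite -setCI -setCU [B :&: A]setIC [B :|: A]setUC in hineqC.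
have -> : alpha A * beta (~: A) * (alpha (~: B) * beta B)
        = (alpha A * beta B) * (alpha (~: B) * beta (~: A)) by ring.
have -> : gamma (A :|: B) * delta (~: (A :|: B))
            * (gamma (~: (A :&: B)) * delta (A :&: B))
        = (gamma (A :|: B) * delta (A :&: B))
            * (gamma (~: (A :&: B)) * delta (~: (A :|: B))) by ring.
by apply: ler_pM => //; apply: mulr_ge0.
Qed.

Theorem theorem2p2 (R : realFieldType) (n : nat) (hn : (0 < n)%N)
  (alpha beta gamma delta : {set 'I_n} -> R)
  (ha : forall A, 0 <= alpha A) (hb : forall A, 0 <= beta A)
  (hc : forall A, 0 <= gamma A) (hd : forall A, 0 <= delta A)
  (hineq : forall A B : {set 'I_n},
     alpha A * beta B <= gamma (A :|: B) * delta (A :&: B)) :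
  \sum_(A : {set 'I_n}) alpha A * beta (~: A)
    <= \sum_(C : {set 'I_n}) gamma C * delta (~: C).
Proof.
pose f A := alpha A * beta (~: A).
pose g C := gamma C * delta (~: C).
have f_ge0 A : 0 <= f A by apply: mulr_ge0.
have g_ge0 C : 0 <= g C by apply: mulr_ge0.
have sq : (\sum_A f A) * (\sum_A f (~: A)) <= (\sum_C g C) * (\sum_C g (~: C)).
  apply: four_functions => // A B.
  by rewrite /f /g !setCK; apply: complement_products_le.
rewrite !sum_setC -!expr2 ler_sqr ?nnegrE in sq => //; by apply: sumr_ge0.
Qed.
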